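(* Let $n=2^s$, $q=2^r$ ($s,r$ positive integers), $N=|SL(n,q)|$, and let $\{C_i\}_{i=0}^N$ be the weight distribution of the code $C(SL(n,q))$. Then $C_i=C_{N-i}$ for $0\le i\le N$.
   Context: $Tr$ is the matrix trace; for a fixed ordering $g_1,\dots,g_N$ of $SL(n,q)$ and $v=(Tr(g_1),\dots,Tr(g_N))\in\mathbb{F}_q^N$, $C(SL(n,q))=\{u\in\mathbb{F}_2^N:u\cdot v=0\}$ (dot product in $\mathbb{F}_q$). $C_i$ is the number of codewords of Hamming weight $i$. *)

From HB Require Import structures.
From mathcomp Require Import all_boot all_order all_algebra all_fingroup all_field.
Set Implicit Arguments. Unset Strict Implicit. Unset Printing Implicit Defensive.
Import GRing.Theory.
Local Open Scope ring_scope.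

Definition SLt (F : finFieldType) (n : nat) : finType :=
  {A : 'M[F]_n | \det A == 1}.

Definition SLcard (F : finFieldType) (n : nat) : nat := #|SLt F n|.

Definition word (F : finFieldType) (n : nat) := {ffun SLt F n -> bool}.

Definition SLcode (F : finFieldType) (n : nat) : {set word F n} :=
  [set u : word F n | \sum_(g : SLt F n) (u g)%:R * \tr (val g) == 0].

Definition hweight (F : finFieldType) (n : nat) (u : word F n) : nat :=
  #|[set g : SLt F n | u g]|.

Definition weight_distr (F : finFieldType) (n : nat) (i : nat) : nat :=
  #|[set u in SLcode F n | hweight u == i]|.

From mathcomp Require Import all_boot all_order all_algebra all_fingroup all_field.
From mathcomp Require Import zify.
Set Implicit Arguments. Unset Strict Implicit. Unset Printing Implicit Defensive.
Import GRing.Theory.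
Local Open Scope ring_scope.

(* Left multiplication by an element of SL(n,F) permutes SL(n,F), so the sum S
   of all its elements satisfies T S = S for every transvection T = 1 + E_ij;
   hence E_ij S = 0, i.e. every row of S vanishes once n >= 2.  The traces
   therefore sum to 0, so complementing a word preserves the code and turns
   weight i into N - i. *)

Lemma det_transvection (R : comPzRingType) n (i j : 'I_n) : i != j ->
  \det (1%:M + delta_mx i j : 'M[R]_n) = 1.
Proof.
move=> neq_ij; wlog lt_ji : i j neq_ij / (j < i)%N => [hwlog|].
  case: (ltngtP i j) => [lt_ij|lt_ji|/val_inj eq_ij]; last by rewrite eq_ij eqxx in neq_ij.
  - by rewrite -det_tr linearD /= trmx1 trmx_delta hwlog // eq_sym.
  - exact: hwlog.
rewrite det_trig.
  rewrite big1 // => k _; rewrite !mxE eqxx.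
  by case: eqP => [->|] /=; rewrite ?(negbTE neq_ij) addr0.
apply/is_trig_mxP => k l lt_kl; rewrite !mxE (ltn_eqF lt_kl : (k == l) = false) add0r.
case: eqP => [eq_ki|] //=; case: eqP => [eq_lj|] //=.
by move: lt_kl lt_ji; rewrite eq_ki eq_lj => /ltn_trans/[apply]; rewrite ltnn.
Qed.

Section SLCode.
Variable F : finFieldType.

Lemma sum_SL_mulmx_l n (T : 'M[F]_n) :
  \det T = 1 -> T *m \sum_(g : SLt F n) val g = \sum_(g : SLt F n) val g.
Proof.
move=> detT; have unitT : T \in unitmx by rewrite unitmxE detT unitr1.
have detTg (g : SLt F n) : \det (T *m val g) == 1.
  by rewrite det_mulmx detT mul1r; exact: (valP g).
pose Tg g : SLt F n := Sub (T *m val g) (detTg g).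
have inj_Tg : injective Tg.
  by move=> g h /(congr1 val); rewrite !SubK => /(can_inj (mulKmx unitT))/val_inj.
rewrite mulmx_sumr [RHS](reindex_inj inj_Tg).
by apply: eq_bigr => g _; rewrite SubK.
Qed.

Lemma sum_SL_eq0 n : (1 < n)%N -> \sum_(g : SLt F n) val g = 0.
Proof.
case: n => [|[|m]] // _; set S := \sum_(g : SLt F m.+2) val g.
apply/row_matrixP => j; rewrite row0; apply/rowP => k; rewrite !mxE.
have neq_ij : lift j ord0 != j by rewrite eq_sym neq_lift.
have : delta_mx (lift j ord0) j *m S = 0.
  apply: (addIr S); rewrite add0r -{2}(mul1mx S) -mulmxDl addrC.
  exact: sum_SL_mulmx_l (det_transvection _ neq_ij).
move/matrixP/(_ (lift j ord0) k); rewrite !mxE => <-.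
rewrite (bigD1 j) //= big1 ?addr0 => [|l /negbTE neq_lj]; rewrite mxE eqxx /=.
  by rewrite eqxx mul1r.
by rewrite neq_lj mul0r.
Qed.

Lemma sum_SL_trace_eq0 n : (1 < n)%N -> \sum_(g : SLt F n) \tr (val g) = 0.
Proof. by move=> n_gt1; rewrite -raddf_sum /= sum_SL_eq0 // mxtrace0. Qed.

Definition word_compl n (u : word F n) : word F n := [ffun g => ~~ u g].

Lemma word_complK n : involutive (@word_compl n).
Proof. by move=> u; apply/ffunP => g; rewrite !ffunE negbK. Qed.

Lemma hweight_compl n (u : word F n) :
  hweight (word_compl u) = (SLcard F n - hweight u)%N.
Proof.
rewrite /hweight /SLcard cardsCs; congr (_ - _)%N.
by apply: eq_card => g; rewrite !inE ffunE negbK.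
Qed.

Lemma SLcode_compl n (u : word F n) :
  (1 < n)%N -> (word_compl u \in SLcode F n) = (u \in SLcode F n).
Proof.
move=> n_gt1; rewrite !inE.
have -> : \sum_(g : SLt F n) (word_compl u g)%:R * \tr (val g)
        = \sum_(g : SLt F n) \tr (val g) - \sum_(g : SLt F n) (u g)%:R * \tr (val g).
  by rewrite -sumrB; apply: eq_bigr => g _; rewrite ffunE; case: (u g);
    rewrite ?mul1r ?mul0r ?subrr ?subr0.
by rewrite sum_SL_trace_eq0 // sub0r oppr_eq0.
Qed.

Lemma weight_distr_compl n i : (1 < n)%N -> (i <= SLcard F n)%N ->
  weight_distr F n (SLcard F n - i) = weight_distr F n i.
Proof.
move=> n_gt1 le_iN.
rewrite /weight_distr -[in RHS](card_imset _ (inv_inj (@word_complK n))).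
rewrite (can_imset_pre _ (@word_complK n)); apply: eq_card => u.
rewrite [LHS]inE [RHS]inE [RHS]inE SLcode_compl // hweight_compl; congr (_ && _).
have le_wN : (hweight u <= SLcard F n)%N := max_card _.
by apply/eqP/eqP; lia.
Qed.

End SLCode.

Theorem corollary17 (F : finFieldType) (r s : nat) :
  (0 < r)%N -> (0 < s)%N -> #|F| = (2 ^ r)%N ->
  forall i : nat, (i <= SLcard F (2 ^ s))%N ->
    weight_distr F (2 ^ s) i = weight_distr F (2 ^ s) (SLcard F (2 ^ s) - i).
Proof.
move=> _ s_gt0 _ i le_iN.
have n_gt1 : (1 < 2 ^ s)%N by rewrite -{1}(expn0 2) ltn_exp2l.
by rewrite weight_distr_compl.
Qed.
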